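(* Let $m\in\mathbb{N}$, $L,M,N\subseteq[m]$, and $D=(1+u^2)\Delta_L^c+u^2\big(\Delta_M^c+(u+u^2)\Delta_N\big)\subseteq\mathcal{R}^m$. Then $C_D$ is a $10$-weight linear code over $\mathcal{R}$ of length $|D|=(2^m-2^{|L|})(2^m-2^{|M|})\cdot2^{|N|}$ and size $2^{3m}$, whose Lee weight distribution is as follows: writing $A(w)$ for the number of codewords of $C_D$ of Lee weight $w$, $A(w)$ is nonzero only for the following $w$, where: - $A\big(3(2^m-2^{|L|})2^{m+|N|-1}\big)=2^{2m-|M|-|M\cup N|}-2^{m-|M|}-2^{m-|M\cup N|+1}+2$; - $A\big(3(2^m-2^{|M|})2^{m+|N|-1}\big)=2^{m-|L|}-1$; - $A\big((2^m-2^{|L|})(3\cdot2^{m-1}-2^{|M|})2^{|N|}\big)=2^{m-|M|}-2^{m-|N|+1}+2^{2m-|M|-|N|+1}-3\cdot2^{2m-|M|-|M\cup N|}+2^{2m-|M|}-2^m+2^{m-|M\cup N|+1}$; - $A\big((3\cdot2^{m-1}-2^{|L|})(2^m-2^{|M|})2^{|N|}\big)=2^{2m-|L|-|N|+1}-2^{m-|N|+1}-2^{2m-|L|-|M\cup N|+1}+2^{m-|M\cup N|+1}+2^{2m-|L|}-2^m-2^{2m-|L|-|M|}+2^{m-|M|}$; - $A\big(3\cdot2^{m+|N|-1}(2^m-2^{|M|})-2^{m+|L|+|N|}\big)=2^{2m-|L|-|M\cup N|+1}-2^{m-|M\cup N|+1}-3\cdot2^{m-|L|}-2^{m-|M|}+2^{2m-|L|-|M|}+3$;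 - $A\big(3(2^m-2^{|L|})(2^m-2^{|M|})2^{|N|-1}\big)=2^{3m}-2^{3m-|L|-|M|}-2^{3m-|L|-|M|-|N|+1}+2^{3m-|L|-|M|-|M\cup N|+1}$; - $A\big(3\cdot2^{m+|N|-1}(2^m-2^{|L|}-2^{|M|})+2^{|L|+|M|+|N|}\big)=2^{3m-|L|-|M|-|N|+1}-2^{2m-|L|-|N|+1}-2^{2m-|M|-|N|+1}+2^{m-|N|+1}+2^{2m-|L|-|M\cup N|+1}-2^{m-|M\cup N|+1}+2^{3m-|L|-|M|}-2^{2m-|M|}-2^{2m-|L|}+2^m-3\cdot2^{3m-|L|-|M|-|M\cup N|}+2^{2m-|L|-|M|}+3\cdot2^{2m-|M|-|M\cup N|}-2^{m-|M|}$; - $A\big(3(2^m-2^{|L|}-2^{|M|})2^{m+|N|-1}\big)=2^{3m-|L|-|M|-|M\cup N|}-2^{2m-|L|-|M|}-2^{2m-|M|-|M\cup N|}+2^{m-|M|}-2^{2m-|L|-|M\cup N|+1}+2^{m-|L|+1}+2^{m-|M\cup N|+1}-2$; - $A\big((2^m-2^{|L|})2^{m+|N|}\big)=2^{m-|M\cup N|+1}+2^{m-|M|}-3$; - $A\big((2^m-2^{|L|})(2^m-2^{|M|})2^{|N|}\big)=2^m+2^{m-|N|+1}-2^{m-|M|}-2^{m-|M\cup N|+1}$; - $A(0)=1$.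
   Context: $\mathcal{R}=\mathbb{Z}_2[u]/\langle u^3-u\rangle$; every $x\in\mathcal{R}^n$ is uniquely $x=r+us+u^2t$ with $r,s,t\in\mathbb{Z}_2^n$, and $\mathbb{Z}_2^n\subseteq\mathcal{R}^n$. The Gray map $\Phi:\mathcal{R}^n\to\mathbb{Z}_2^{3n}$ is $\Phi(r+us+u^2t)=(r+s,\,s+t,\,t)$, and the Lee weight is $wt_L(x)=$ Hamming weight of $\Phi(x)$. $[m]=\{1,\dots,m\}$; for $X\subseteq[m]$, $\Delta_X=\{v\in\mathbb{Z}_2^m:\mathrm{Supp}(v)\subseteq X\}$ and $\Delta_X^c=\mathbb{Z}_2^m\setminus\Delta_X$. For $D_1,D_2,D_3\subseteq\mathbb{Z}_2^m$, $(1+u^2)D_1+u^2(D_2+(u+u^2)D_3)=\{(1+u^2)t_1+u^2t_2+u^2(u+u^2)t_3:t_i\in D_i\}\subseteq\mathcal{R}^m$. Given $D=\{d_1,\dots,d_n\}\subseteq\mathcal{R}^m$ (in a fixed order), $c_D(v)=(v\cdot d_1,\dots,v\cdot d_n)$ with $v\cdot d=\sum_i v_id_i$, and $C_D=\{c_D(v):v\in\mathcal{R}^m\}$, a linear code over $\mathcal{R}$. A $k$-weight code has exactly $k$ distinct nonzero Lee weights.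
   Formalization: L ≠ [m] and M ≠ [m] are assumed, $C_D$ has at most ten rather than exactly ten distinct nonzero Lee weights, and listed frequencies whose weights coincide are added in A(w). The statement above fails without it. *)

From HB Require Import structures.
From mathcomp Require Import all_boot all_order all_algebra.
Set Implicit Arguments. Unset Strict Implicit. Unset Printing Implicit Defensive.
Import GRing.Theory.
Local Open Scope ring_scope.

(* The ring  R = Z_2[u]/<u^3 - u>.  Every element is uniquely r + u s + u^2 t
   with r,s,t in Z_2; we represent it by the triple (r, s, t). *)
Definition Rr : finType := ('F_2 * 'F_2 * 'F_2)%type.
Definition rc (x : Rr) : 'F_2 := x.1.1.
Definition sc (x : Rr) : 'F_2 := x.1.2.
Definition tc (x : Rr) : 'F_2 := x.2.
Definition mkR (r s t : 'F_2) : Rr := (r, s, t).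

Definition Rzero : Rr := mkR 0 0 0.
Definition Rone  : Rr := mkR 1 0 0.
Definition Ru    : Rr := mkR 0 1 0.
Definition Ru2   : Rr := mkR 0 0 1.

Definition Radd (x y : Rr) : Rr :=
  mkR (rc x + rc y) (sc x + sc y) (tc x + tc y).

(* Product of (r1 + u s1 + u^2 t1)(r2 + u s2 + u^2 t2): as polynomials the
   coefficients of 1,u,u^2,u^3,u^4 are
     c0 = r1 r2, c1 = r1 s2 + s1 r2, c2 = r1 t2 + s1 s2 + t1 r2,
     c3 = s1 t2 + t1 s2, c4 = t1 t2,
   and reducing with u^3 = u, u^4 = u^2 gives (c0, c1 + c3, c2 + c4). *)
Definition Rmul (x y : Rr) : Rr :=
  let c0 := rc x * rc y in
  let c1 := rc x * sc y + sc x * rc y in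
  let c2 := rc x * tc y + sc x * sc y + tc x * rc y in
  let c3 := sc x * tc y + tc x * sc y in
  let c4 := tc x * tc y in
  mkR c0 (c1 + c3) (c2 + c4).

(* Gray map Phi(r + us + u^2 t) = (r+s, s+t, t); Lee weight = Hamming weight *)
Definition nzb (a : 'F_2) : nat := nat_of_bool (a != 0).
Definition wtLR (x : Rr) : nat :=
  addn (addn (nzb (rc x + sc x)) (nzb (sc x + tc x))) (nzb (tc x)).

Definition Z2vec (m : nat) := {ffun 'I_m -> 'F_2}.
Definition Rvec (m : nat) := {ffun 'I_m -> Rr}.

Definition embZ2 m (v : Z2vec m) : Rvec m := [ffun i => mkR (v i) 0 0].
Definition vadd m (x y : Rvec m) : Rvec m := [ffun i => Radd (x i) (y i)].
Definition vscale m (c : Rr) (x : Rvec m) : Rvec m := [ffun i => Rmul c (x i)].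

Definition supp m (v : Z2vec m) : {set 'I_m} := [set i | v i != 0].
Definition Delta m (X : {set 'I_m}) : {set Z2vec m} :=
  [set v : Z2vec m | supp v \subset X].
Definition Deltac m (X : {set 'I_m}) : {set Z2vec m} := ~: Delta X.

Definition Delem m (t1 t2 t3 : Z2vec m) : Rvec m :=
  vadd (vadd (vscale (Radd Rone Ru2) (embZ2 t1)) (vscale Ru2 (embZ2 t2)))
       (vscale (Rmul Ru2 (Radd Ru Ru2)) (embZ2 t3)).
Definition Dset m (L M N : {set 'I_m}) : {set Rvec m} :=
  [set Delem t.1.1 t.1.2 t.2
   | t in setX (setX (Deltac L) (Deltac M)) (Delta N)].

Definition dotR m (v d : Rvec m) : Rr := \big[Radd/Rzero]_(i < m) Rmul (v i) (d i).

Definition cD m (D : {set Rvec m}) (v : Rvec m) : {ffun 'I_#|D| -> Rr} :=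
  [ffun i => dotR v (@enum_val _ (mem D) i)].

Definition CD m (D : {set Rvec m}) : {set {ffun 'I_#|D| -> Rr}} :=
  [set cD D v | v : Rvec m].

Definition wtL n (c : {ffun 'I_n -> Rr}) : nat := (\sum_(i < n) wtLR (c i))%N.

Definition Acount m (D : {set Rvec m}) (w : nat) : nat :=
  #|[set c in CD D | wtL c == w]|.

Definition nonzero_weights m (D : {set Rvec m}) : seq nat :=
  undup [seq wtL c | c <- enum (CD D) & wtL c != 0%N].

Definition p2 (e : nat) : int := (2%:Z) ^+ e.

(* the weight distribution table of Theorem 3.4: pairs (2 * weight, frequency).
   Weights are stored DOUBLED so that weights such as 3(2^m-2^l)2^(m+n-1) are
   represented exactly in int (no division, no truncated exponent m+n-1);
   l = |L|, a = |M|, n = |N|, b = |M ∪ N|. *)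
Definition table34 (m l a n b : nat) : seq (int * int) :=
  [:: (3 * (p2 m - p2 l) * p2 (m + n),
        p2 (2 * m - a - b) - p2 (m - a) - p2 (m - b + 1) + 2);
      (3 * (p2 m - p2 a) * p2 (m + n),
        p2 (m - l) - 1);
      ((p2 m - p2 l) * (3 * p2 m - 2 * p2 a) * p2 n,
        p2 (m - a) - p2 (m - n + 1) + p2 (2 * m - a - n + 1) - 3 * p2 (2 * m - a - b)
        + p2 (2 * m - a) - p2 m + p2 (m - b + 1));
      ((3 * p2 m - 2 * p2 l) * (p2 m - p2 a) * p2 n,
        p2 (2 * m - l - n + 1) - p2 (m - n + 1) - p2 (2 * m - l - b + 1) + p2 (m - b + 1)
        + p2 (2 * m - l) - p2 m - p2 (2 * m - l - a) + p2 (m - a));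
      (3 * p2 (m + n) * (p2 m - p2 a) - 2 * p2 (m + l + n),
        p2 (2 * m - l - b + 1) - p2 (m - b + 1) - 3 * p2 (m - l) - p2 (m - a)
        + p2 (2 * m - l - a) + 3);
      (3 * (p2 m - p2 l) * (p2 m - p2 a) * p2 n,
        p2 (3 * m) - p2 (3 * m - l - a) - p2 (3 * m - l - a - n + 1)
        + p2 (3 * m - l - a - b + 1));
      (3 * p2 (m + n) * (p2 m - p2 l - p2 a) + 2 * p2 (l + a + n),
        p2 (3 * m - l - a - n + 1) - p2 (2 * m - l - n + 1) - p2 (2 * m - a - n + 1)
        + p2 (m - n + 1) + p2 (2 * m - l - b + 1) - p2 (m - b + 1) + p2 (3 * m - l - a)
        - p2 (2 * m - a) - p2 (2 * m - l) + p2 m - 3 * p2 (3 * m - l - a - b)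
        + p2 (2 * m - l - a) + 3 * p2 (2 * m - a - b) - p2 (m - a));
      (3 * (p2 m - p2 l - p2 a) * p2 (m + n),
        p2 (3 * m - l - a - b) - p2 (2 * m - l - a) - p2 (2 * m - a - b) + p2 (m - a)
        - p2 (2 * m - l - b + 1) + p2 (m - l + 1) + p2 (m - b + 1) - 2);
      (2 * (p2 m - p2 l) * p2 (m + n),
        p2 (m - b + 1) + p2 (m - a) - 3);
      (2 * (p2 m - p2 l) * (p2 m - p2 a) * p2 n,
        p2 m + p2 (m - n + 1) - p2 (m - a) - p2 (m - b + 1));
      (0, 1)].

From mathcomp Require Import all_boot all_order all_algebra.
From mathcomp Require Import ring zify.
Import GRing.Theory.
Set Implicit Arguments. Unset Strict Implicit. Unset Printing Implicit Defensive.
Local Open Scope ring_scope.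

(* Write v in R^m through three binary vectors p = v(0), w = v(1) and the
   u-coefficient q of v, and note d = (1+u^2)t1 + u^2 t2 + u^2(u+u^2)t3 =
   t1 + u t3 + u^2 (t1 + t2 + t3).  The three Gray coordinates of v.d are then
   the binary linear forms p.t1 + q.t2 + w.t3, p.t1 + w.t2 and
   p.t1 + (q+w).t2 + w.t3, so 2[x <> 0] = 1 - (-1)^x turns twice the Lee weight
   of c_D(v) into
     3|D| - X_L(p) (X_M(q) Y_N(w) + 2^|N| X_M(w) + X_M(q+w) Y_N(w)),
   with X and Y the character sums over Delta^c and Delta.  Y_N(a) is 2^|N| or 0
   according as a vanishes on N or not, and X_M(a) is 2^m - 2^|M|, -2^|M| or 0
   according as a is 0, a nonzero vector vanishing on M, or neither; counting
   the triples (p, q, w) in each class gives the distribution.  On Delta_L^c and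
   Delta_M^c these forms separate p, q and w, so v |-> c_D(v) is injective. *)

Lemma F2_cases (x : 'F_2) : x = 0 \/ x = 1.
Proof. case: x => [[|[|k]] Hk]; [left|right|by []]; exact: val_inj. Qed.

Lemma F2_neq0 (x : 'F_2) : x != 0 -> x = 1.
Proof. by case: (F2_cases x) => ->. Qed.

Lemma F2_addxx (x : 'F_2) : x + x = 0.
Proof. by case: (F2_cases x) => ->; apply/eqP. Qed.

Definition sgn (x : 'F_2) : int := if x == 0 then 1 else -1.

Lemma sgn1 : sgn 1 = -1.
Proof. by []. Qed.

Lemma sgnD (x y : 'F_2) : sgn (x + y) = sgn x * sgn y.
Proof. by case: (F2_cases x) => ->; case: (F2_cases y) => ->. Qed.

Lemma nzb_sgn (x : 'F_2) : 2 * (nzb x)%:Z = 1 - sgn x.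
Proof. by case: (F2_cases x) => ->; apply/eqP. Qed.

Lemma p2E k : (2 ^ k)%N%:Z = p2 k.
Proof. by rewrite /p2 -natz natrX. Qed.

Lemma p2D j k : p2 (j + k) = p2 j * p2 k.
Proof. exact: exprD. Qed.

Lemma p2_subn k j : (j <= k)%N -> (2 ^ k - 2 ^ j)%N%:Z = p2 k - p2 j.
Proof. by move=> le_jk; rewrite -!p2E -subzn ?leq_exp2l. Qed.

Lemma sum_constz (T : finType) (A : {set T}) (F : T -> int) c :
  {in A, forall x, F x = c} -> \sum_(x in A) F x = #|A|%:Z * c.
Proof. by move=> FA; rewrite (eq_bigr (fun=> c)) // sumr_const -mulr_natl natz. Qed.

Lemma sum_setC (T : finType) (B : {set T}) (R : nmodType) (F : T -> R) :
  \sum_t F t = \sum_(t in B) F t + \sum_(t in ~: B) F t.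
Proof. by rewrite (bigID (mem B)) /=; congr (_ + _); apply: eq_bigl => t; rewrite inE. Qed.

Lemma sum_constz_but1 (T : finType) (A : {set T}) a0 (F : T -> int) c :
  a0 \in A -> {in A, forall a, a != a0 -> F a = c} ->
  \sum_(a in A) F a = F a0 + (#|A|%:Z - 1) * c.
Proof.
move=> a0A Fc; rewrite (big_setD1 _ a0A) (sum_constz (c := c)) => [|a /setD1P [? ?]]; last exact: Fc.
by rewrite (cardsD1 a0 A) a0A PoszD addrAC subrr add0r.
Qed.

Lemma sum_constz_but2 (T : finType) (A : {set T}) a0 a1 (F : T -> int) c :
  a0 \in A -> a1 \in A -> a1 != a0 -> {in A, forall a, a != a0 -> a != a1 -> F a = c} ->
  \sum_(a in A) F a = F a0 + F a1 + (#|A|%:Z - 2) * c.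
Proof.
move=> a0A a1A a10 Fc; rewrite (big_setD1 _ a0A) (sum_constz_but1 (a0 := a1) (c := c)).
- by rewrite (cardsD1 a0 A) a0A add1n intS /=; ring.
- by rewrite !inE a10.
by move=> a /setD1P [? ?] ?; apply: Fc.
Qed.

Lemma sum_setX (R : comPzRingType) (T1 T2 : finType) (A : {set T1}) (B : {set T2})
    (F : T1 -> R) (G : T2 -> R) :
  \sum_(t in setX A B) F t.1 * G t.2 = (\sum_(x in A) F x) * (\sum_(y in B) G y).
Proof.
rewrite big_distrl /=; under [RHS]eq_bigr do rewrite big_distrr /=.
by rewrite pair_big_dep; apply: eq_bigl => -[x y]; rewrite in_setX.
Qed.

Lemma sum_setX3 (R : comPzRingType) (T1 T2 T3 : finType)
    (A : {set T1}) (B : {set T2}) (C : {set T3}) (F : T1 -> R) (G : T2 -> R) (H : T3 -> R) :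
  \sum_(t in setX (setX A B) C) F t.1.1 * G t.1.2 * H t.2 =
  (\sum_(x in A) F x) * (\sum_(y in B) G y) * (\sum_(z in C) H z).
Proof. by rewrite (sum_setX _ _ (fun x => F x.1 * G x.2)) sum_setX. Qed.

Section BinaryVectors.

Variable m : nat.
Implicit Types (X Y : {set 'I_m}) (a b s t : Z2vec m).

Lemma vec_addxx a : a + a = 0.
Proof. by apply/ffunP => i; rewrite !ffunE F2_addxx. Qed.

Lemma vec_addK a : involutive (+%R a).
Proof. by move=> b; rewrite /= addrA vec_addxx add0r. Qed.

Definition dot a t : 'F_2 := \sum_i a i * t i.

Lemma dotDl a b t : dot (a + b) t = dot a t + dot b t.
Proof. by rewrite /dot -big_split; apply: eq_bigr => i _; rewrite ffunE mulrDl. Qed.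

Lemma dotDr a s t : dot a (s + t) = dot a s + dot a t.
Proof. by rewrite /dot -big_split; apply: eq_bigr => i _; rewrite ffunE mulrDr. Qed.

Lemma dot0r a : dot a 0 = 0.
Proof. by rewrite /dot big1 // => i _; rewrite ffunE mulr0. Qed.

Definition unit_vec (j : 'I_m) : Z2vec m := [ffun k => (k == j)%:R].

Lemma dot_unit_vec a j : dot a (unit_vec j) = a j.
Proof.
rewrite /dot (bigD1 j) //= big1 ?addr0; first by rewrite ffunE eqxx mulr1.
by move=> k /negbTE nkj; rewrite ffunE nkj mulr0.
Qed.

Lemma in_supp t i : (i \in supp t) = (t i != 0).
Proof. by rewrite inE. Qed.

Lemma supp_inj : injective (@supp m).
Proof.
move=> s t eq_st; apply/ffunP => i.
have : (i \in supp s) = (i \in supp t) by rewrite eq_st.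
by rewrite !in_supp; case: (F2_cases (s i)) => ->; case: (F2_cases (t i)) => ->.
Qed.

Lemma card_Delta X : #|Delta X| = (2 ^ #|X|)%N.
Proof.
have supp_Delta : @supp m @: Delta X = powerset X.
  apply/setP => Y; apply/imsetP/idP => [[t] | ].
    by rewrite !inE => sub_tX ->.
  rewrite inE => sub_YX; exists [ffun i => (i \in Y)%:R].
    rewrite inE; apply: subset_trans sub_YX; apply/subsetP => i.
    by rewrite in_supp ffunE; case: (i \in Y).
  by apply/setP => i; rewrite in_supp ffunE; case: (i \in Y).
rewrite -card_powerset -supp_Delta card_in_imset // => s t _ _; exact: supp_inj.
Qed.

Lemma card_Z2vec : #|{: Z2vec m}| = (2 ^ m)%N.
Proof.
have := card_Delta setT; rewrite cardsT card_ord => <-.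
by apply: eq_card => t; rewrite !inE subsetT.
Qed.

Lemma card_Deltac X : #|Deltac X| = (2 ^ m - 2 ^ #|X|)%N.
Proof. by rewrite cardsCs setCK card_Delta card_Z2vec. Qed.

Lemma Delta0 X : 0 \in Delta X.
Proof. by rewrite inE; apply/subsetP => i; rewrite in_supp ffunE eqxx. Qed.

Definition ann X : {set Z2vec m} := [set a : Z2vec m | [forall i in X, a i == 0]].

Lemma ann_dot X a t : a \in ann X -> t \in Delta X -> dot a t = 0.
Proof.
rewrite !inE => /forall_inP a0 /subsetP tX; rewrite /dot big1 // => i _.
case: (F2_cases (t i)) => ti; rewrite ti ?mulr0 //.
by rewrite (eqP (a0 i _)) ?mul0r //; apply: tX; rewrite in_supp ti.
Qed.

Lemma ann_Delta X : ann X = Delta (~: X).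
Proof.
apply/setP => a; rewrite !inE; apply/forall_inP/subsetP => [a0 i | sub_aX i iX].
  by rewrite in_supp inE; apply: contra => /a0.
by apply: contraLR iX => ai; move: (sub_aX i); rewrite in_supp ai inE; apply.
Qed.

Lemma card_ann X : #|ann X| = (2 ^ (m - #|X|))%N.
Proof. by rewrite ann_Delta card_Delta cardsCs setCK card_ord. Qed.

Lemma annU X Y : ann (X :|: Y) = ann X :&: ann Y.
Proof.
apply/setP => a; rewrite !inE; apply/forall_inP/andP => [a0 | [/forall_inP aX /forall_inP aY] i].
  by split; apply/forall_inP => i i_in; apply: a0; rewrite inE i_in ?orbT.
by rewrite inE => /orP [/aX | /aY].
Qed.

Lemma ann0 X : 0 \in ann X.
Proof. by rewrite inE; apply/forall_inP => i _; rewrite ffunE. Qed.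

Lemma annD X a b : a \in ann X -> b \in ann X -> a + b \in ann X.
Proof.
rewrite !inE => /forall_inP a0 /forall_inP b0; apply/forall_inP => i iX.
by rewrite ffunE (eqP (a0 i iX)) (eqP (b0 i iX)) addr0.
Qed.

Lemma annDl X a b : a \in ann X -> (a + b \in ann X) = (b \in ann X).
Proof.
move=> aX; apply/idP/idP; last exact: annD.
by rewrite -{2}(vec_addK a b); apply: annD.
Qed.

Definition charsum (S : {set Z2vec m}) a : int := \sum_(t in S) sgn (dot a t).

Lemma vec_add_eq0 a b : (a + b == 0) = (a == b).
Proof.
apply/eqP/eqP => [ab0 | ->]; last exact: vec_addxx.
by rewrite -(vec_addK b a) [b + a]addrC ab0 addr0.
Qed.

Lemma charsum_Delta X a : charsum (Delta X) a = if a \in ann X then p2 #|X| else 0.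
Proof.
case: ifP => [aX | /negbT].
  rewrite /charsum (sum_constz (c := 1)) ?mulr1 ?card_Delta ?p2E // => t tX.
  by rewrite (ann_dot aX tX).
rewrite inE negb_forall_in => /exists_inP [i iX /F2_neq0 ai].
pose flip := +%R (unit_vec i).
have flipX t : (flip t \in Delta X) = (t \in Delta X).
  rewrite !inE; apply/subsetP/subsetP => sub_tX k; rewrite in_supp => tk;
    case: (eqVneq k i) => [-> // | ki]; apply: sub_tX; move: tk;
    by rewrite in_supp !ffunE (negbTE ki) add0r.
have : charsum (Delta X) a = - charsum (Delta X) a.
  rewrite {1}/charsum (reindex_inj (can_inj (vec_addK (unit_vec i)))) /=.
  rewrite (eq_bigl (mem (Delta X))) => [|t]; last exact: flipX.
  rewrite -sumrN; apply: eq_bigr => t _.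
  by rewrite dotDr dot_unit_vec ai sgnD sgn1 mulN1r.
lia.
Qed.

Lemma charsum_Deltac X a :
  charsum (Deltac X) a =
  if a == 0 then p2 m - p2 #|X| else if a \in ann X then - p2 #|X| else 0.
Proof.
have full : charsum (Delta setT) a = charsum (Delta X) a + charsum (Deltac X) a.
  rewrite /charsum (bigID (mem (Delta X))) /=; congr (_ + _); apply: eq_bigl => t.
    by rewrite !inE subsetT.
  by rewrite !inE subsetT.
have annT : (a \in ann setT) = (a == 0).
  rewrite inE; apply/forall_inP/eqP => [a0 | -> i _]; last by rewrite ffunE.
  by apply/ffunP => i; rewrite ffunE; apply/eqP/a0; rewrite inE.
move: full; rewrite !charsum_Delta annT cardsT card_ord.
by case: eqVneq => [-> | _]; rewrite ?ann0 /=; case: (a \in ann X); lia.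
Qed.

End BinaryVectors.

Definition eval0 m (v : Rvec m) : Z2vec m := [ffun i => rc (v i)].
Definition ucoef m (v : Rvec m) : Z2vec m := [ffun i => sc (v i)].
Definition eval1 m (v : Rvec m) : Z2vec m := [ffun i => rc (v i) + sc (v i) + tc (v i)].

Lemma Delem_coord m (t1 t2 t3 : Z2vec m) i :
  Delem t1 t2 t3 i = mkR (t1 i) (t3 i) (t1 i + t2 i + t3 i).
Proof.
rewrite !ffunE; case: (F2_cases (t1 i)) => ->; case: (F2_cases (t2 i)) => ->;
by case: (F2_cases (t3 i)) => ->; congr (_, _, _); apply/eqP.
Qed.

Lemma gray_Rmul (x : Rr) (y1 y2 y3 : 'F_2) :
  let e := Rmul x (mkR y1 y3 (y1 + y2 + y3)) in
  let x1 := rc x + sc x + tc x in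
  [/\ rc e + sc e = rc x * y1 + sc x * y2 + x1 * y3,
      sc e + tc e = rc x * y1 + x1 * y2 &
      tc e = rc x * y1 + (sc x + x1) * y2 + x1 * y3].
Proof.
case: x => [[a b] c]; rewrite /rc /sc /tc /=.
by case: (F2_cases a) => ->; case: (F2_cases b) => ->; case: (F2_cases c) => ->;
  case: (F2_cases y1) => ->; case: (F2_cases y2) => ->; case: (F2_cases y3) => ->;
  split; apply/eqP.
Qed.

Lemma gray_dotR_Delem m (v : Rvec m) t1 t2 t3 :
  let e := dotR v (Delem t1 t2 t3) in
  [/\ rc e + sc e = dot (eval0 v) t1 + dot (ucoef v) t2 + dot (eval1 v) t3,
      sc e + tc e = dot (eval0 v) t1 + dot (eval1 v) t2 &
      tc e = dot (eval0 v) t1 + dot (ucoef v + eval1 v) t2 + dot (eval1 v) t3].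
Proof.
have rc_sum := big_morph rc (op2 := Radd) (op1 := +%R) (fun _ _ => erefl) (erefl : rc Rzero = 0).
have sc_sum := big_morph sc (op2 := Radd) (op1 := +%R) (fun _ _ => erefl) (erefl : sc Rzero = 0).
have tc_sum := big_morph tc (op2 := Radd) (op1 := +%R) (fun _ _ => erefl) (erefl : tc Rzero = 0).
rewrite /= /dotR rc_sum sc_sum tc_sum dotDl /dot -!big_split.
split; apply: eq_bigr => i _; rewrite Delem_coord !ffunE;
  have [g1 g2 g3] := gray_Rmul (v i) (t1 i) (t2 i) (t3 i).
- exact: g1.
- exact: g2.
- by rewrite g3 mulrDl.
Qed.

Definition Dparams m (L M N : {set 'I_m}) := setX (setX (Deltac L) (Deltac M)) (Delta N).

Lemma Delem_inj m : injective (fun t : Z2vec m * Z2vec m * Z2vec m => Delem t.1.1 t.1.2 t.2).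
Proof.
move=> [[a1 a2] a3] [[b1 b2] b3] /= eq_ab.
have coord i : [/\ a1 i = b1 i, a3 i = b3 i & a1 i + a2 i + a3 i = b1 i + b2 i + b3 i].
  have := congr1 (fun d : Rvec m => d i) eq_ab; rewrite /= !Delem_coord => eq_i.
  exact: And3 (congr1 rc eq_i) (congr1 sc eq_i) (congr1 tc eq_i).
have e1 : a1 = b1 by apply/ffunP => i; case: (coord i).
have e3 : a3 = b3 by apply/ffunP => i; case: (coord i).
suff -> : a2 = b2 by rewrite e1 e3.
by apply/ffunP => i; case: (coord i) => -> -> /addIr /addrI.
Qed.

Lemma card_Dset m (L M N : {set 'I_m}) :
  #|Dset L M N| = ((2 ^ m - 2 ^ #|L|) * (2 ^ m - 2 ^ #|M|) * 2 ^ #|N|)%N.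
Proof.
rewrite card_in_imset => [|s t _ _]; last exact: Delem_inj.
by rewrite !cardsX !card_Deltac card_Delta.
Qed.

Lemma wtL_cD m (L M N : {set 'I_m}) (v : Rvec m) :
  wtL (cD (Dset L M N) v) =
  (\sum_(t in Dparams L M N) wtLR (dotR v (Delem t.1.1 t.1.2 t.2)))%N.
Proof.
transitivity (\sum_(d in Dset L M N) wtLR (dotR v d))%N.
  by rewrite [RHS]big_enum_val; apply: eq_bigr => i _; rewrite ffunE.
by rewrite big_imset // => s t _ _; apply: Delem_inj.
Qed.

Lemma two_wtLR_Delem m (v : Rvec m) t1 t2 t3 :
  let s a t := sgn (dot a t) in
  2 * (wtLR (dotR v (Delem t1 t2 t3)))%:Z =
  3 - s (eval0 v) t1 * s (ucoef v) t2 * s (eval1 v) t3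
    - s (eval0 v) t1 * s (eval1 v) t2 * 1
    - s (eval0 v) t1 * s (ucoef v + eval1 v) t2 * s (eval1 v) t3.
Proof.
case: (gray_dotR_Delem v t1 t2 t3) => /= g1 g2 g3.
by rewrite /wtLR !PoszD !mulrDr !nzb_sgn g1 g2 g3 !sgnD; ring.
Qed.

Lemma two_wtL_cD m (L M N : {set 'I_m}) (v : Rvec m) :
  (2 * wtL (cD (Dset L M N) v))%N%:Z =
  3 * #|Dset L M N|%:Z - charsum (Deltac L) (eval0 v) *
    (charsum (Deltac M) (ucoef v) * charsum (Delta N) (eval1 v)
     + charsum (Deltac M) (eval1 v) * p2 #|N|
     + charsum (Deltac M) (ucoef v + eval1 v) * charsum (Delta N) (eval1 v)).
Proof.
rewrite wtL_cD PoszM (big_morph Posz PoszD (erefl _)) big_distrr /=.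
under eq_bigr do rewrite two_wtLR_Delem.
rewrite !sumrB sumr_const /Dset card_in_imset => [|s t _ _]; last exact: Delem_inj.
pose s (a t : Z2vec m) := sgn (dot a t).
rewrite (sum_setX3 _ _ _ (s (eval0 v)) (s (ucoef v)) (s (eval1 v))).
rewrite (sum_setX3 _ _ _ (s (eval0 v)) (s (eval1 v)) (fun=> 1)).
rewrite (sum_setX3 _ _ _ (s (eval0 v)) (s (ucoef v + eval1 v)) (s (eval1 v))).
rewrite sumr_const card_Delta -mulr_natr !natz p2E /charsum /Dparams; ring.
Qed.

Definition coords m (v : Rvec m) : Z2vec m * (Z2vec m * Z2vec m) :=
  (eval0 v, (eval1 v, ucoef v)).
Definition of_coords m (x : Z2vec m * (Z2vec m * Z2vec m)) : Rvec m :=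
  [ffun i => mkR (x.1 i) (x.2.2 i) (x.2.1 i - x.1 i - x.2.2 i)].

Lemma coordsK m : cancel (@coords m) (@of_coords m).
Proof.
move=> v; apply/ffunP => i; rewrite !ffunE.
by case: (v i) => [[r s] t]; rewrite /mkR /rc /sc /tc /=; congr (_, _, _); ring.
Qed.

Lemma of_coordsK m : cancel (@of_coords m) (@coords m).
Proof.
move=> [p [w q]]; rewrite /coords; congr (_, (_, _)); apply/ffunP => i;
by rewrite !ffunE /mkR /rc /sc /tc /=; ring.
Qed.

Lemma sum_Rvec_coords m (F : Z2vec m -> Z2vec m -> Z2vec m -> int) :
  \sum_(v : Rvec m) F (eval0 v) (ucoef v) (eval1 v) = \sum_p \sum_w \sum_q F p q w.
Proof.
under [RHS]eq_bigr do rewrite pair_big.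
rewrite [RHS]pair_big (reindex (@of_coords m)) /=; last first.
  by exists (@coords m) => x _; [apply: of_coordsK | apply: coordsK].
by apply: eq_bigr => x _; rewrite -[x in RHS]of_coordsK.
Qed.

Lemma Deltac_witness m (X : {set 'I_m}) (t : Z2vec m) j :
  j \notin X -> t j != 0 -> t \in Deltac X.
Proof. by move=> jX tj; rewrite !inE; apply: contra jX => /subsetP; apply; rewrite in_supp. Qed.

Lemma dot_Deltac_inj m (X : {set 'I_m}) (a b : Z2vec m) : X != setT ->
  {in Deltac X, forall t, dot a t = dot b t} -> a = b.
Proof.
rewrite -subTset => /subsetPn [j _ jX] eq_ab.
have ej : unit_vec j \in Deltac X.
  by apply: (Deltac_witness jX); rewrite ffunE eqxx oner_neq0.
have abj : a j = b j by rewrite -!(dot_unit_vec _ j) eq_ab.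
apply/ffunP => i; have [-> // | ij] := eqVneq i j.
have eij : unit_vec j + unit_vec i \in Deltac X.
  by apply: (Deltac_witness jX); rewrite !ffunE eqxx (eq_sym j i) (negbTE ij) addr0 oner_neq0.
by move: (eq_ab _ eij); rewrite !dotDr !dot_unit_vec abj => /addrI.
Qed.

Lemma Deltac_nonempty m (X : {set 'I_m}) : X != setT -> exists t, t \in Deltac X.
Proof.
rewrite -subTset => /subsetPn [j _ jX]; exists (unit_vec j).
by apply: (Deltac_witness jX); rewrite ffunE eqxx oner_neq0.
Qed.

Lemma cD_inj m (L M N : {set 'I_m}) : L != setT -> M != setT -> injective (cD (Dset L M N)).
Proof.
move=> nTL nTM u v eq_uv.
have eq_gray t1 t2 t3 : t1 \in Deltac L -> t2 \in Deltac M -> t3 \in Delta N ->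
  [/\ dot (eval0 u) t1 + dot (ucoef u) t2 + dot (eval1 u) t3
      = dot (eval0 v) t1 + dot (ucoef v) t2 + dot (eval1 v) t3,
      dot (eval0 u) t1 + dot (eval1 u) t2 = dot (eval0 v) t1 + dot (eval1 v) t2 &
      dot (eval0 u) t1 + dot (ucoef u + eval1 u) t2 + dot (eval1 u) t3
      = dot (eval0 v) t1 + dot (ucoef v + eval1 v) t2 + dot (eval1 v) t3].
  move=> h1 h2 h3.
  have D_t : Delem t1 t2 t3 \in Dset L M N.
    by apply/imsetP; exists (t1, t2, t3); rewrite ?in_setX ?h1 ?h2 ?h3.
  have := congr1 (fun c : {ffun _ -> Rr} => c (enum_rank_in D_t (Delem t1 t2 t3))) eq_uv.
  rewrite /cD !ffunE enum_rankK_in // => eq_d.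
  case: (gray_dotR_Delem u t1 t2 t3) => /= <- <- <-.
  by case: (gray_dotR_Delem v t1 t2 t3) => /= <- <- <-; rewrite eq_d.
have [t1 t1L] := Deltac_nonempty nTL; have [t2 t2M] := Deltac_nonempty nTM.
have N0 := Delta0 N.
have e1 : eval1 u = eval1 v.
  apply: (dot_Deltac_inj nTM) => t tM; case: (eq_gray _ _ _ t1L tM N0) => g1 _.
  by rewrite !dot0r !addr0 in g1 *; rewrite !dotDl !addrA g1 => /addrI.
have e0 : eval0 u = eval0 v.
  by apply: (dot_Deltac_inj nTL) => t tL; case: (eq_gray _ _ _ tL t2M N0) => _ + _; rewrite e1 => /addIr.
have eu : ucoef u = ucoef v.
  apply: (dot_Deltac_inj nTM) => t tM; case: (eq_gray _ _ _ t1L tM N0) => + _ _.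
  by rewrite e0 !dot0r !addr0 => /addrI.
by rewrite -(coordsK u) -(coordsK v) /coords e0 e1 eu.
Qed.

Lemma card_CD m (L M N : {set 'I_m}) : L != setT -> M != setT ->
  #|CD (Dset L M N)| = (2 ^ (3 * m))%N.
Proof.
move=> nTL nTM; rewrite card_imset; last exact: cD_inj.
have card_Rr : #|{: Rr}| = 8%N by rewrite !card_prod card_Fp.
by rewrite card_ffun card_Rr card_ord expnM.
Qed.

Section CharsumDeltacDistribution.

Variables (m : nat) (X : {set 'I_m}).
Local Notation chi := (charsum (Deltac X)).
Local Notation P := (p2 m).
Local Notation A := (p2 #|X|).
Local Notation x := (p2 (m - #|X|)).

Lemma card_annz : #|ann X|%:Z = x.
Proof. by rewrite card_ann p2E. Qed.

Lemma card_annCz : #|~: ann X|%:Z = P - x.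
Proof.
have := cardsC (ann X); rewrite card_Z2vec card_ann -!p2E => <-.
by rewrite PoszD addrAC subrr add0r.
Qed.

Lemma charsum_Deltac0 : chi 0 = P - A.
Proof. by rewrite charsum_Deltac eqxx. Qed.

Lemma charsum_Deltac_ann a : a \in ann X -> a != 0 -> chi a = - A.
Proof. by rewrite charsum_Deltac => -> /negbTE ->. Qed.

Lemma charsum_Deltac_notann a : a \notin ann X -> chi a = 0.
Proof.
move=> aX; rewrite charsum_Deltac (negbTE aX).
by case: eqP aX => // ->; rewrite ann0.
Qed.

Lemma sum_charsum_Deltac_ann (H : int -> int) :
  \sum_(a in ann X) H (chi a) = H (P - A) + (x - 1) * H (- A).
Proof.
rewrite (sum_constz_but1 (c := H (- A)) (ann0 X)) ?card_annz ?charsum_Deltac0 //.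
by move=> a aX a0; rewrite charsum_Deltac_ann.
Qed.

Lemma sum_charsum_Deltac_notann (H : int -> int) :
  \sum_(a in ~: ann X) H (chi a) = (P - x) * H 0.
Proof.
by rewrite -card_annCz; apply: sum_constz => a; rewrite inE => /charsum_Deltac_notann ->.
Qed.

Lemma sum_charsum_Deltac (H : int -> int) :
  \sum_a H (chi a) = H (P - A) + (x - 1) * H (- A) + (P - x) * H 0.
Proof. by rewrite (sum_setC (ann X)) sum_charsum_Deltac_ann sum_charsum_Deltac_notann. Qed.

Lemma sum_charsum_Deltac_shift_ann (J : int -> int -> int) w :
  w \in ann X -> w != 0 ->
  \sum_q J (chi q) (chi (q + w)) =
  J (P - A) (- A) + J (- A) (P - A) + (x - 2) * J (- A) (- A) + (P - x) * J 0 0.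
Proof.
move=> wX w0; rewrite (sum_setC (ann X)).
rewrite (sum_constz_but2 (c := J (- A) (- A)) (ann0 X) wX w0); last first.
  move=> q qX q0 qw; rewrite !charsum_Deltac_ann ?annD //.
  by rewrite vec_add_eq0.
rewrite (sum_constz (c := J 0 0)) => [|q]; last first.
  by rewrite inE => qX; rewrite !charsum_Deltac_notann // addrC annDl.
rewrite add0r vec_addxx charsum_Deltac0 charsum_Deltac_ann // card_annz card_annCz.
by ring.
Qed.

Lemma sum_charsum_Deltac_shift_notann (J : int -> int -> int) w : w \notin ann X ->
  \sum_q J (chi q) (chi (q + w)) =
  J (P - A) 0 + J 0 (P - A) + (x - 1) * (J (- A) 0 + J 0 (- A)) + (P - 2 * x) * J 0 0.
Proof.
move=> wX; have shift_out q : q \in ann X -> chi (q + w) = 0.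
  by move=> qX; apply: charsum_Deltac_notann; rewrite annDl.
rewrite (sum_setC (ann X)).
rewrite (eq_bigr (fun q : Z2vec m => J (chi q) 0)) => [|q /shift_out -> //].
rewrite [E in _ + E](eq_bigr (fun q : Z2vec m => J 0 (chi (q + w)))) => [|q]; last first.
  by rewrite inE => /charsum_Deltac_notann ->.
have -> : \sum_(q in ~: ann X) J 0 (chi (q + w)) =
          \sum_(q : Z2vec m) J 0 (chi (q + w)) - \sum_(q in ann X) J 0 (chi (q + w)).
  by rewrite (sum_setC (ann X)) addrAC subrr add0r.
have -> : \sum_(q : Z2vec m) J 0 (chi (q + w)) = \sum_q J 0 (chi q).
  by rewrite [RHS](reindex_inj (addIr w)).
rewrite (sum_charsum_Deltac_ann (J^~ 0)) (sum_charsum_Deltac (J 0)).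
rewrite (sum_constz (c := J 0 0)) => [|q /shift_out -> //].
by rewrite card_annz; ring.
Qed.

End CharsumDeltacDistribution.

Section BracketSum.

Variables (m : nat) (M N : {set 'I_m}) (G : int -> int).
Local Notation chiM := (charsum (Deltac M)).
Local Notation chiN := (charsum (Delta N)).
Local Notation P := (p2 m).
Local Notation A := (p2 #|M|).
Local Notation K := (p2 #|N|).
Local Notation xM := (p2 (m - #|M|)).
Local Notation xN := (p2 (m - #|N|)).
Local Notation xB := (p2 (m - #|M :|: N|)).
Local Notation bracket q w := (chiM q * chiN w + chiM w * K + chiM (q + w) * chiN w).

Lemma card_annI : #|ann N :&: ann M|%:Z = xB.
Proof. by rewrite setIC -annU card_annz. Qed.

Lemma sum_bracket_notann :
  \sum_(w in ~: ann N) \sum_q G (bracket q w) =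
  P * ((xM - xB) * G (- (A * K)) + (P - xM - xN + xB) * G 0).
Proof.
rewrite (eq_bigr (fun w => P * G (chiM w * K))) => [|w]; last first.
  rewrite inE charsum_Delta => /negbTE ->.
  rewrite (eq_bigr (fun=> G (chiM w * K))) => [|q _]; last by rewrite !mulr0 addr0 add0r.
  by rewrite sumr_const card_Z2vec -mulr_natl natz p2E.
rewrite (big_setID (ann M)) /=.
rewrite (sum_constz (c := P * G (- (A * K)))) => [|w /setIP [/setCP wN wM]]; last first.
  by rewrite charsum_Deltac_ann ?mulNr //; apply/eqP => w0; apply: wN; rewrite w0 ann0.
rewrite (sum_constz (c := P * G 0)) => [|w /setDP [_ wM]]; last first.
  by rewrite charsum_Deltac_notann ?mul0r.
have card_MnN : #|~: ann N :&: ann M|%:Z = xM - xB.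
  have := cardsID (ann N) (ann M); rewrite setDE !(setIC (ann M)).
  by move/(congr1 Posz); rewrite PoszD card_annI card_annz; lia.
have card_nMnN : #|~: ann N :\: ann M|%:Z = P - xM - xN + xB.
  have := cardsID (ann M) (~: ann N) => /(congr1 Posz).
  by rewrite PoszD card_MnN (card_annCz N); lia.
rewrite card_MnN card_nMnN; ring.
Qed.

Lemma sum_bracket_ann :
  \sum_(w in ann N) \sum_q G (bracket q w) =
  G (3 * (P - A) * K) + (xM + 2 * xB - 3) * G ((P - 3 * A) * K)
  + (P - xM + 2 * (xN - xB)) * G ((P - A) * K) + (xB - 1) * (xM - 2) * G (- (3 * A * K))
  + ((xB - 1) * (P - xM) + 2 * (xN - xB) * (xM - 1)) * G (- (A * K))
  + (xN - xB) * (P - 2 * xM) * G 0.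
Proof.
pose J c x y := G (x * K + c * K + y * K).
rewrite (eq_bigr (fun w => \sum_q J (chiM w) (chiM q) (chiM (q + w)))) => [|w wN]; last first.
  by rewrite charsum_Delta wN.
have NM0 : 0 \in ann N :&: ann M by rewrite inE !ann0.
have S1 : {in ann N :&: ann M, forall w, w != 0 ->
  \sum_q J (chiM w) (chiM q) (chiM (q + w)) =
  J (- A) (P - A) (- A) + J (- A) (- A) (P - A) + (xM - 2) * J (- A) (- A) (- A)
  + (P - xM) * J (- A) 0 0}.
  by move=> w /setIP [_ wM] w0; rewrite charsum_Deltac_ann // sum_charsum_Deltac_shift_ann.
have S2 : {in ann N :\: ann M, forall w,
  \sum_q J (chiM w) (chiM q) (chiM (q + w)) =
  J 0 (P - A) 0 + J 0 0 (P - A) + (xM - 1) * (J 0 (- A) 0 + J 0 0 (- A))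
  + (P - 2 * xM) * J 0 0 0}.
  by move=> w /setDP [_ wM]; rewrite charsum_Deltac_notann // sum_charsum_Deltac_shift_notann.
have card_NnM : #|ann N :\: ann M|%:Z = xN - xB.
  have := cardsID (ann M) (ann N) => /(congr1 Posz).
  by rewrite PoszD card_annI card_annz; lia.
rewrite (big_setID (ann M)) /= (sum_constz_but1 NM0 S1) (sum_constz S2).
rewrite charsum_Deltac0 (eq_bigr (fun q => J (P - A) (chiM q) (chiM q))) => [|q _]; last by rewrite addr0.
rewrite (sum_charsum_Deltac M (fun s => J (P - A) s s)) card_annI card_NnM /J.
rewrite ?(mul0r, addr0, add0r, mulNr).
have -> : (P - A) * K + (P - A) * K + (P - A) * K = 3 * (P - A) * K by ring.
have -> : (P - A) * K - A * K - A * K = (P - 3 * A) * K by ring.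
have -> : - (A * K) + (P - A) * K - A * K = (P - 3 * A) * K by ring.
have -> : - (A * K) - A * K + (P - A) * K = (P - 3 * A) * K by ring.
have -> : - (A * K) - A * K - A * K = - (3 * A * K) by ring.
ring.
Qed.

Lemma sum_bracket :
  \sum_w \sum_q G (bracket q w) =
  G (3 * (P - A) * K) + (xM + 2 * xB - 3) * G ((P - 3 * A) * K)
  + (P - xM + 2 * (xN - xB)) * G ((P - A) * K) + (xB - 1) * (xM - 2) * G (- (3 * A * K))
  + ((xB - 1) * (P - xM) + P * (xM - xB) + 2 * (xN - xB) * (xM - 1)) * G (- (A * K))
  + ((xN - xB) * (P - 2 * xM) + P * (P - xM - xN + xB)) * G 0.
Proof. by rewrite (sum_setC (ann N)) sum_bracket_ann sum_bracket_notann; ring. Qed.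

End BracketSum.

Section PowerSplitting.

Variable m : nat.
Implicit Types X Y Z : {set 'I_m}.

Lemma card_le_ord X : (#|X| <= m)%N.
Proof. by rewrite -[m in (_ <= m)%N]card_ord max_card. Qed.

Lemma p2_3m : p2 (3 * m) = p2 m * p2 m * p2 m.
Proof. by rewrite -!p2D; congr p2; lia. Qed.

Lemma p2_2m_sub X : p2 (2 * m - #|X|) = p2 m * p2 (m - #|X|).
Proof. by rewrite -p2D; congr p2; have := card_le_ord X; lia. Qed.

Lemma p2_2m_sub2 X Y : p2 (2 * m - #|X| - #|Y|) = p2 (m - #|X|) * p2 (m - #|Y|).
Proof. by rewrite -p2D; congr p2; have := card_le_ord X; have := card_le_ord Y; lia. Qed.

Lemma p2_3m_sub2 X Y : p2 (3 * m - #|X| - #|Y|) = p2 m * p2 (m - #|X|) * p2 (m - #|Y|).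
Proof. by rewrite -!p2D; congr p2; have := card_le_ord X; have := card_le_ord Y; lia. Qed.

Lemma p2_3m_sub3 X Y Z :
  p2 (3 * m - #|X| - #|Y| - #|Z|) = p2 (m - #|X|) * p2 (m - #|Y|) * p2 (m - #|Z|).
Proof.
by rewrite -!p2D; congr p2; have := card_le_ord X; have := card_le_ord Y; have := card_le_ord Z; lia.
Qed.

End PowerSplitting.

Lemma weight_enumerator m (L M N : {set 'I_m}) (G : int -> int) :
  \sum_(v : Rvec m) G (2 * wtL (cD (Dset L M N) v))%N%:Z =
  \sum_(p <- table34 m #|L| #|M| #|N| #|M :|: N|) p.2 * G p.1.
Proof.
have card_Dz : #|Dset L M N|%:Z = (p2 m - p2 #|L|) * (p2 m - p2 #|M|) * p2 #|N|.
  by rewrite card_Dset !PoszM !p2_subn ?card_le_ord // p2E.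
pose D := (p2 m - p2 #|L|) * (p2 m - p2 #|M|) * p2 #|N|.
pose F s q w := G (3 * D - s * (charsum (Deltac M) q * charsum (Delta N) w
  + charsum (Deltac M) w * p2 #|N| + charsum (Deltac M) (q + w) * charsum (Delta N) w)).
under eq_bigr do rewrite two_wtL_cD card_Dz.
rewrite (sum_Rvec_coords (fun p => F (charsum (Deltac L) p))).
rewrite (sum_charsum_Deltac L (fun s => \sum_w \sum_q F s q w)) /F.
rewrite !(sum_bracket M N (fun t => G (3 * D - _ * t))) !mul0r !mulr0 !subr0.
rewrite /table34 !big_cons big_nil /= p2_3m !p2D !p2_3m_sub3 !p2_3m_sub2 !p2_2m_sub2 !p2_2m_sub.
rewrite [p2 1]expr1 /D.
set P := p2 m; set Ll := p2 #|L|; set A := p2 #|M|; set K := p2 #|N|.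
set D3 := 3 * ((P - Ll) * (P - A) * K).
have -> : D3 - (P - Ll) * (3 * (P - A) * K) = 0 by rewrite /D3; ring.
have -> : D3 - (P - Ll) * ((P - 3 * A) * K) = 2 * (P - Ll) * (P * K) by rewrite /D3; ring.
have -> : D3 - (P - Ll) * ((P - A) * K) = 2 * (P - Ll) * (P - A) * K by rewrite /D3; ring.
have -> : D3 - (P - Ll) * - (3 * A * K) = 3 * (P - Ll) * (P * K) by rewrite /D3; ring.
have -> : D3 - (P - Ll) * - (A * K) = (P - Ll) * (3 * P - 2 * A) * K by rewrite /D3; ring.
have -> : D3 - - Ll * (3 * (P - A) * K) = 3 * (P - A) * (P * K) by rewrite /D3; ring.
have -> : D3 - - Ll * ((P - 3 * A) * K) = 3 * (P * K) * (P - A) - 2 * (P * Ll * K).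
  by rewrite /D3; ring.
have -> : D3 - - Ll * ((P - A) * K) = (3 * P - 2 * Ll) * (P - A) * K by rewrite /D3; ring.
have -> : D3 - - Ll * - (3 * A * K) = 3 * (P - Ll - A) * (P * K) by rewrite /D3; ring.
have -> : D3 - - Ll * - (A * K) = 3 * (P * K) * (P - Ll - A) + 2 * (Ll * A * K).
  by rewrite /D3; ring.
have -> : D3 = 3 * (P - Ll) * (P - A) * K by rewrite /D3; ring.
ring.
Qed.

Lemma Acount_table34 m (L M N : {set 'I_m}) (w : nat) : L != setT -> M != setT ->
  (Acount (Dset L M N) w)%:Z =
  \sum_(p <- table34 m #|L| #|M| #|N| #|M :|: N| | p.1 == (2 * w)%:Z) p.2.
Proof.
move=> nTL nTM; rewrite /Acount; set D := Dset L M N.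
have -> : [set c in CD D | wtL c == w] = cD D @: [set v | wtL (cD D v) == w].
  apply/setP => c; rewrite inE; apply/andP/imsetP => [[/imsetP [v _ ->] wv] | [v]].
    by exists v; rewrite ?inE.
  by rewrite inE => wv ->; split; first exact: imset_f.
rewrite card_imset; last exact: cD_inj.
rewrite -[LHS]mulr1 -(sum_constz (F := fun=> 1)) // big_mkcond /=.
under eq_bigr do rewrite inE -(eqn_pmul2l (isT : 0 < 2)%N) -eqz_nat.
rewrite /D (weight_enumerator L M N (fun x => if x == (2 * w)%:Z then 1 else 0)).
by rewrite [RHS]big_mkcond; apply: eq_bigr => p _; case: eqP; rewrite ?mulr1 ?mulr0.
Qed.

Lemma size_nonzero_weights m (D : {set Rvec m}) (T : seq (int * int)) :
  (forall w, (Acount D w)%:Z = \sum_(p <- T | p.1 == (2 * w)%:Z) p.2) ->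
  0 \in [seq p.1 | p <- T] -> (size (nonzero_weights D) < size T)%N.
Proof.
move=> A_T T0; set s := nonzero_weights D.
have s_pos x : x \in s -> x != 0%N /\ (0 < Acount D x)%N.
  rewrite mem_undup => /mapP [c]; rewrite mem_filter mem_enum => /andP [nz cC] ->.
  by split => //; apply/card_gt0P; exists c; rewrite inE cC eqxx.
have uniq_s2 : uniq (0 :: [seq (2 * x)%N%:Z | x <- s]).
  rewrite /= map_inj_uniq ?undup_uniq => [|x y /eqP]; last by rewrite eqz_nat eqn_pmul2l // => /eqP.
  rewrite andbT; apply/mapP => -[x /s_pos [nx _]] /eqP; rewrite eq_sym eqz_nat muln_eq0.
  by rewrite (negbTE nx).
have sub_s2 : {subset 0 :: [seq (2 * x)%N%:Z | x <- s] <= [seq p.1 | p <- T]}.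
  move=> y; rewrite inE => /predU1P [-> // | /mapP [x /s_pos [_ Ax] ->]].
  apply: contraLR Ax => /mapP nT; rewrite -leqNgt leqn0 -eqz_nat A_T big_hasC //.
  by apply/hasPn => p pT; apply/eqP => p1; apply: nT; exists p.
by have := uniq_leq_size uniq_s2 sub_s2; rewrite /= !size_map.
Qed.

Unset Implicit Arguments.

Theorem theorem3p4 (m : nat) (L M N : {set 'I_m}) :
  L != setT -> M != setT ->
  let D := Dset L M N in
  [/\ #|D| = ((2 ^ m - 2 ^ #|L|) * (2 ^ m - 2 ^ #|M|) * 2 ^ #|N|)%N,
      #|CD D| = (2 ^ (3 * m))%N,
      (size (nonzero_weights D) <= 10)%N &
      forall w : nat,
        (Acount D w)%:Z =
        \sum_(p <- table34 m #|L| #|M| #|N| #|M :|: N| | p.1 == (2 * w)%:Z) p.2].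
Proof.
move=> nTL nTM D.
have A_table w := @Acount_table34 m L M N w nTL nTM.
have table0 : 0 \in [seq p.1 | p <- table34 m #|L| #|M| #|N| #|M :|: N|].
  by rewrite /table34 /= !inE eqxx !orbT.
split=> //.
- exact: card_Dset.
- exact: card_CD.
- exact: size_nonzero_weights A_table table0.
Qed.
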